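(* Let $\alpha\in\mathbb{C}$ with $|\alpha|<\frac{1}{10}$, and let $\eta:=(1-|\mathrm{Re}(\alpha)|)/3$. Let $g:[0,2]\to\mathbb{R}$ be the continuous piecewise affine map with $g=0$ on $[0,\eta]$, $g=1$ on $[2\eta,2-2\eta]$, $g=0$ on $[2-\eta,2]$, and affine on $[\eta,2\eta]$ and on $[2-2\eta,2-\eta]$; still denote by $g$ its $2$-periodic extension to $\mathbb{R}$. Define $$\psi^{+}(c):=c+\alpha\, g(\mathrm{Re}(c)),\qquad \psi^{-}(c):=c-\alpha+\alpha\, g\big(1+\mathrm{Re}(c-\alpha)\big),\qquad c\in\mathbb{C}.$$ Then $\psi^+,\psi^-$ are homeomorphisms of $\mathbb{C}$ satisfying $$\psi^{+}(c+1-\alpha)=\psi^{-}(c)+1,\quad \psi^{-}(c+1+\alpha)=\psi^{+}(c)+1\quad(\forall c\in\mathbb{C}),\qquad \psi^{+}(0)=\psi^{-}(0)=0,\qquad \lim_{c\to0}\frac{\psi^{\pm}(c)}{c}=\lim_{c\to\infty}\frac{\psi^{\pm}(c)}{c}=1 .$$ Moreover, for all $c\in\mathbb{C}\setminus\{0\}$, $$\left|\frac{\psi^{\pm}(c)}{c}-1\right|<\min\left(\frac{1}{6},\frac{1}{10\,|\mathrm{Re}(c)|}\right)$$ (with $\frac{1}{10|\mathrm{Re}(c)|}:=+\infty$ when $\mathrm{Re}(c)=0$). *)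

From Stdlib Require Import Reals Lra.
From Coquelicot Require Import Coquelicot.
Open Scope R_scope.

(** 2-periodic reduction of x into [0,2): x - 2 floor(x/2). *)
Definition red2 (x : R) : R := x - 2 * IZR (Int_part (x / 2)).

Definition eta_of (alpha : C) : R := (1 - Rabs (Re alpha)) / 3.

Definition g0 (eta t : R) : R :=
  if Rle_dec t eta then 0
  else if Rle_dec t (2 * eta) then (t - eta) / eta
  else if Rle_dec t (2 - 2 * eta) then 1
  else if Rle_dec t (2 - eta) then (2 - eta - t) / eta
  else 0.

Definition g (alpha : C) (x : R) : R := g0 (eta_of alpha) (red2 x).

Definition psi_plus (alpha : C) (c : C) : C :=
  (c + alpha * RtoC (g alpha (Re c)))%C.

Definition psi_minus (alpha : C) (c : C) : C :=
  (c - alpha + alpha * RtoC (g alpha (1 + Re (c - alpha))))%C.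

Definition is_homeomorphism (f : C -> C) : Prop :=
  exists h : C -> C,
    (forall x, h (f x) = x) /\ (forall y, f (h y) = y) /\
    (forall x, continuous f x) /\ (forall y, continuous h y).

Definition lim_at0 (f : C -> C) (l : C) : Prop :=
  filterlim f (locally' (RtoC 0)) (locally l).

Definition lim_at_infty (f : C -> C) (l : C) : Prop :=
  forall eps : R, 0 < eps -> exists M : R,
    forall c : C, M < Cmod c -> Cmod (f c - l)%C < eps.

Definition ratio_bound (f : C -> C) : Prop :=
  forall c : C, c <> RtoC 0 ->
    Cmod (f c / c - 1)%C < 1 / 6 /\
    (Re c <> 0 -> Cmod (f c / c - 1)%C < 1 / (10 * Rabs (Re c))).

From Stdlib Require Import Reals Lra Lia FunctionalExtensionality.
From Coquelicot Require Import Coquelicot.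
Open Scope R_scope.

(* Both maps are horizontal shears c |-> c + beta K(Re c), with beta = alpha,
   K = g for psi+, and beta = -alpha, K(x) = 1 - g(1 + x - Re alpha) for psi-.
   In both cases K takes values in [0,1], is (1/eta)-Lipschitz and vanishes on
   [-eta, eta].  As |beta|/eta < 1/3, the real part x |-> x + Re beta K(x) is
   bi-Lipschitz onto R, so the shear is a bi-Lipschitz homeomorphism of C.
   Finally psi(c)/c - 1 = beta K(Re c)/c, and the profile conditions give
   K <= 1 and 2 eta K(x) <= |x|, whence the ratio bounds and both limits. *)

Lemma lipschitz_continuous {K : AbsRing} {U V : NormedModule K} (f : U -> V) (M : R) :
  (forall x y, norm (minus (f x) (f y)) <= M * norm (minus x y)) ->
  forall x, continuous f x.
Proof.
  intros Hf x. apply filterlim_locally. intros eps.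
  apply locally_le_locally_norm.
  pose proof (Rabs_pos M) as HM. pose proof (cond_pos eps) as Heps.
  assert (Hd : 0 < eps / (Rabs M + 1)) by (apply Rdiv_lt_0_compat; lra).
  exists (mkposreal _ Hd). intros y Hy. apply norm_compat1.
  unfold ball_norm in Hy; simpl in Hy.
  pose proof (norm_ge_0 (minus y x)) as Hn.
  assert (Hlt : (Rabs M + 1) * norm (minus y x) < eps).
  { apply Rmult_lt_compat_l with (r := Rabs M + 1) in Hy; [|lra].
    replace ((Rabs M + 1) * (eps / (Rabs M + 1))) with (pos eps) in Hy by (field; lra).
    exact Hy. }
  pose proof (RRle_abs M).
  eapply Rle_lt_trans; [apply Hf|]. nra.
Qed.

Lemma C_lipschitz_continuous (f : C -> C) (M : R) :
  (forall x y, Cmod (f x - f y) <= M * Cmod (x - y)) -> forall x, continuous f x.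
Proof. intros Hf. exact (lipschitz_continuous (V := C_NormedModule) f M Hf). Qed.

Lemma R_lipschitz_continuity (f : R -> R) (M : R) :
  (forall x y, Rabs (f x - f y) <= M * Rabs (x - y)) -> continuity f.
Proof.
  intros Hf x. apply continuity_pt_filterlim.
  exact (lipschitz_continuous (V := R_NormedModule) f M Hf x).
Qed.

Lemma Cmod_mul_RtoC (c : C) (r : R) : Cmod (c * RtoC r) = Cmod c * Rabs r.
Proof. rewrite Cmod_mult, Cmod_R. reflexivity. Qed.

Lemma Re_mul_RtoC (c : C) (r : R) : Re (c * RtoC r) = Re c * r.
Proof. destruct c; unfold RtoC; simpl. ring. Qed.

(** * The profile g *)

Definition trapezoid (e t : R) : R := Rmax 0 (Rmin e (Rmin (t - e) (2 - e - t))).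

Ltac trapezoid_cases := unfold trapezoid, Rmax, Rmin; repeat destruct Rle_dec; lra.

Lemma g0_trapezoid e t : 0 < e <= 1/2 -> g0 e t = trapezoid e t / e.
Proof.
  intros He. unfold g0.
  destruct (Rle_dec t e).
  { replace (trapezoid e t) with 0 by trapezoid_cases. field; lra. }
  destruct (Rle_dec t (2 * e)).
  { replace (trapezoid e t) with (t - e) by trapezoid_cases. reflexivity. }
  destruct (Rle_dec t (2 - 2 * e)).
  { replace (trapezoid e t) with e by trapezoid_cases. field; lra. }
  destruct (Rle_dec t (2 - e)).
  { replace (trapezoid e t) with (2 - e - t) by trapezoid_cases. reflexivity. }
  replace (trapezoid e t) with 0 by trapezoid_cases. field; lra.
Qed.

Lemma trapezoid_range e t : 0 <= e -> 0 <= trapezoid e t <= e.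
Proof. intros; split; trapezoid_cases. Qed.

Lemma trapezoid_le_ends e t : 0 <= e -> 0 <= t <= 2 ->
  trapezoid e t <= t /\ trapezoid e t <= 2 - t.
Proof. intros; split; trapezoid_cases. Qed.

Lemma trapezoid_lipschitz e s t :
  Rabs (trapezoid e s - trapezoid e t) <= Rabs (s - t).
Proof. unfold Rabs; repeat destruct Rcase_abs; trapezoid_cases. Qed.

Lemma trapezoid_out e t : t <= e \/ 2 - e <= t -> trapezoid e t = 0.
Proof. intros; trapezoid_cases. Qed.

Lemma trapezoid_top e t : 0 <= e -> 2 * e <= t <= 2 - 2 * e -> trapezoid e t = e.
Proof. intros; trapezoid_cases. Qed.

Lemma red2_eq x k : 2 * IZR k <= x < 2 * IZR k + 2 -> red2 x = x - 2 * IZR k.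
Proof. intros Hx. unfold red2. rewrite <- (Int_part_spec (x / 2) k) by lra. reflexivity. Qed.

Lemma red2_block x : 2 * IZR (Int_part (x / 2)) <= x < 2 * IZR (Int_part (x / 2)) + 2.
Proof. pose proof (base_Int_part (x / 2)). lra. Qed.

Lemma red2_add2 x : red2 (x + 2) = red2 x.
Proof.
  pose proof (red2_block x) as Hx.
  rewrite (red2_eq (x + 2) (Int_part (x / 2) + 1)) by (rewrite plus_IZR; lra).
  unfold red2. rewrite plus_IZR. ring.
Qed.

(* The floors of x/2 and y/2 either agree, and then the trapezoid is 1-Lipschitz,
   or the even integer 2(floor(x/2)+1) lies between x and y, where both
   trapezoids vanish. *)
Lemma periodic_trapezoid_lipschitz e x y : 0 <= e ->
  Rabs (trapezoid e (red2 x) - trapezoid e (red2 y)) <= Rabs (x - y).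
Proof.
  intros He.
  assert (Hle : forall x y, x <= y ->
    Rabs (trapezoid e (red2 x) - trapezoid e (red2 y)) <= Rabs (x - y)).
  { clear x y. intros x y Hxy. unfold red2.
    pose proof (red2_block x) as Bx. pose proof (red2_block y) as By.
    set (k := Int_part (x / 2)) in *. set (m := Int_part (y / 2)) in *.
    destruct (Z.lt_total k m) as [Hkm|[Hkm|Hkm]].
    - assert (IZR k + 1 <= IZR m) by (rewrite <- plus_IZR; apply IZR_le; lia).
      pose proof (trapezoid_range e (x - 2 * IZR k) He).
      pose proof (trapezoid_range e (y - 2 * IZR m) He).
      pose proof (trapezoid_le_ends e (x - 2 * IZR k) He ltac:(lra)).
      pose proof (trapezoid_le_ends e (y - 2 * IZR m) He ltac:(lra)).
      unfold Rabs; repeat destruct Rcase_abs; lra.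
    - rewrite Hkm. eapply Rle_trans; [apply trapezoid_lipschitz|]. right; f_equal; ring.
    - assert (IZR m + 1 <= IZR k) by (rewrite <- plus_IZR; apply IZR_le; lia). lra. }
  destruct (Rle_or_lt x y); [now apply Hle|].
  rewrite Rabs_minus_sym, (Rabs_minus_sym x). apply Hle; lra.
Qed.

Section PeriodicProfile.
Variable e : R.
Hypothesis e_range : 0 < e <= 1/2.

Lemma periodic_g0 x : g0 e (red2 x) = trapezoid e (red2 x) / e.
Proof. now apply g0_trapezoid. Qed.

Lemma periodic_g0_range x : 0 <= g0 e (red2 x) <= 1.
Proof.
  rewrite periodic_g0. pose proof (trapezoid_range e (red2 x)) as H.
  split; [apply Rdiv_le_0_compat; lra|].
  apply Rmult_le_reg_r with e; [lra|]. field_simplify; lra.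
Qed.

Lemma periodic_g0_lipschitz x y :
  Rabs (g0 e (red2 x) - g0 e (red2 y)) <= / e * Rabs (x - y).
Proof.
  rewrite !periodic_g0. unfold Rdiv. rewrite <- Rmult_minus_distr_r, Rabs_mult.
  rewrite (Rabs_right (/ e)) by (left; apply Rinv_0_lt_compat; lra).
  rewrite Rmult_comm. apply Rmult_le_compat_l; [left; apply Rinv_0_lt_compat; lra|].
  apply periodic_trapezoid_lipschitz; lra.
Qed.

Lemma periodic_g0_zero x : Rabs x <= e -> g0 e (red2 x) = 0.
Proof.
  intros Hx. rewrite periodic_g0. unfold Rabs in Hx. destruct Rcase_abs.
  - rewrite (red2_eq x (-1)) by (simpl; lra).
    rewrite trapezoid_out by (simpl; lra). unfold Rdiv; ring.
  - rewrite (red2_eq x 0) by (simpl; lra).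
    rewrite trapezoid_out by (simpl; lra). unfold Rdiv; ring.
Qed.

Lemma periodic_g0_one x : 2 * e <= x <= 2 - 2 * e -> g0 e (red2 x) = 1.
Proof.
  intros Hx. rewrite periodic_g0, (red2_eq x 0) by (simpl; lra).
  rewrite trapezoid_top by (simpl; lra). field; lra.
Qed.

End PeriodicProfile.

Lemma eta_of_bounds alpha : Cmod alpha < 1/10 -> 3/10 < eta_of alpha <= 1/3.
Proof.
  intros H. pose proof (re_le_Cmod alpha). pose proof (Rabs_pos (Re alpha)).
  unfold eta_of. lra.
Qed.

(** * Shears along the real direction *)

Section Shear.
Variables (beta : C) (K : R -> R).

Definition shear (c : C) : C := (c + beta * RtoC (K (Re c)))%C.
Definition shear_re (x : R) : R := x + Re beta * K x.

Lemma Re_shear c : Re (shear c) = shear_re (Re c).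
Proof. unfold shear, shear_re. rewrite <- Re_mul_RtoC. reflexivity. Qed.

Lemma shear0 : K 0 = 0 -> shear 0%C = 0%C.
Proof. intros HK. unfold shear. change (Re 0%C) with 0. rewrite HK. ring. Qed.

Hypothesis K_range : forall x, 0 <= K x <= 1.

Lemma shear_ratio_sub1 (c : C) : c <> 0%C ->
  Cmod (shear c / c - 1)%C = Cmod beta * K (Re c) / Cmod c.
Proof.
  intros Hc.
  replace (shear c / c - 1)%C with (beta * RtoC (K (Re c)) / c)%C
    by (unfold shear; field; exact Hc).
  rewrite Cmod_div, Cmod_mul_RtoC, Rabs_right by (auto; apply Rle_ge, K_range).
  reflexivity.
Qed.

Lemma shear_ratio_at_infty : lim_at_infty (fun c => (shear c / c)%C) 1%C.
Proof.
  intros eps Heps. exists ((Cmod beta + 1) / eps). intros c Hc.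
  pose proof (K_range (Re c)). pose proof (Cmod_ge_0 beta).
  assert (Hm : 0 < Cmod c).
  { apply Rle_lt_trans with ((Cmod beta + 1) / eps); [|exact Hc].
    apply Rdiv_le_0_compat; lra. }
  rewrite shear_ratio_sub1 by (apply Cmod_gt_0; exact Hm).
  assert (eps * Cmod c > Cmod beta + 1).
  { apply Rmult_lt_compat_l with (r := eps) in Hc; [|exact Heps].
    replace (eps * ((Cmod beta + 1) / eps)) with (Cmod beta + 1) in Hc by (field; lra).
    lra. }
  apply Rmult_lt_reg_r with (Cmod c); [lra|].
  unfold Rdiv. rewrite Rmult_assoc, Rinv_l by lra. nra.
Qed.

Lemma shear_ratio_at0 r : 0 < r -> (forall x, Rabs x < r -> K x = 0) ->
  lim_at0 (fun c => (shear c / c)%C) 1%C.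
Proof.
  intros Hr HK. apply filterlim_locally. intros eps.
  apply (locally_le_locally_norm (K := C_AbsRing) (V := C_NormedModule)).
  exists (mkposreal _ Hr). intros c Hc Hc0.
  change (Cmod (c + - 0) < r) in Hc. rewrite Copp_0, Cplus_0_r in Hc.
  assert (Hone : (shear c / c)%C = 1%C).
  { unfold shear. rewrite HK; [field; exact Hc0|]. pose proof (re_le_Cmod c). lra. }
  change (ball (RtoC 1) eps (shear c / c)%C). rewrite Hone. apply ball_center.
Qed.

Lemma shear_ratio_bound e : 3/10 <= e -> Cmod beta < 1/10 ->
  (forall x, 2 * e * K x <= Rabs x) -> ratio_bound shear.
Proof.
  intros He Hb HK c Hc.
  rewrite shear_ratio_sub1 by exact Hc.
  pose proof (proj1 (Cmod_gt_0 c) Hc) as Hm.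
  pose proof (re_le_Cmod c). pose proof (HK (Re c)). pose proof (K_range (Re c)).
  pose proof (Cmod_ge_0 beta).
  set (k := K (Re c)) in *. set (m := Cmod c) in *. set (B := Cmod beta) in *.
  split.
  - apply Rmult_lt_reg_r with m; [lra|]. unfold Rdiv. rewrite Rmult_assoc, Rinv_l by lra.
    destruct (Req_dec k 0) as [Hk0|Hk0]; [rewrite Hk0; lra|].
    assert (3/5 * k <= m) by nra. nra.
  - intros Hx. pose proof (Rabs_pos_lt _ Hx) as Hax.
    apply Rmult_lt_reg_r with (m * (10 * Rabs (Re c))); [nra|].
    replace (B * k / m * (m * (10 * Rabs (Re c)))) with (10 * B * k * Rabs (Re c))
      by (field; lra).
    replace (1 / (10 * Rabs (Re c)) * (m * (10 * Rabs (Re c)))) with m by (field; lra).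
    assert (Hk : 0 <= B * k <= B) by (split; nra).
    assert (B * k * Rabs (Re c) <= B * m) by nra.
    nra.
Qed.

Variable L : R.
Hypothesis K_lipschitz : forall x y, Rabs (K x - K y) <= L * Rabs (x - y).
Hypothesis shear_contracting : Cmod beta * L < 1.

Lemma shear_rate_nonneg : 0 <= Cmod beta * L.
Proof.
  pose proof (K_lipschitz 1 0) as H. pose proof (Rabs_pos (K 1 - K 0)).
  rewrite Rminus_0_r, Rabs_R1 in H.
  apply Rmult_le_pos; [apply Cmod_ge_0|lra].
Qed.

Lemma shear_variation x y :
  Cmod beta * Rabs (K x - K y) <= Cmod beta * L * Rabs (x - y).
Proof. rewrite Rmult_assoc. apply Rmult_le_compat_l; [apply Cmod_ge_0|apply K_lipschitz]. Qed.

Lemma shear_re_bilipschitz x y :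
  (1 - Cmod beta * L) * Rabs (x - y) <= Rabs (shear_re x - shear_re y) <=
  (1 + Cmod beta * L) * Rabs (x - y).
Proof.
  assert (HP : Rabs (Re beta * (K x - K y)) <= Cmod beta * L * Rabs (x - y)).
  { rewrite Rabs_mult. eapply Rle_trans; [|apply shear_variation].
    apply Rmult_le_compat_r; [apply Rabs_pos|apply re_le_Cmod]. }
  unfold shear_re.
  replace (x + Re beta * K x - (y + Re beta * K y))
    with ((x - y) + Re beta * (K x - K y)) by ring.
  revert HP. generalize (Re beta * (K x - K y)). intros P HP.
  unfold Rabs in *. repeat destruct Rcase_abs; lra.
Qed.

Lemma shear_re_surjective u : {x | shear_re x = u}.
Proof.
  assert (Hdev : forall x, Rabs (shear_re x - x) <= Cmod beta).
  { intros x. unfold shear_re. replace (x + Re beta * K x - x) with (Re beta * K x) by ring.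
    rewrite Rabs_mult, (Rabs_right (K x)) by (apply Rle_ge, K_range).
    pose proof (re_le_Cmod beta). pose proof (K_range x). pose proof (Rabs_pos (Re beta)).
    nra. }
  set (d := Cmod beta + 1).
  destruct (IVT (fun x => shear_re x - u) (u - d) (u + d)) as [x [_ Hx]].
  - apply R_lipschitz_continuity with (1 + Cmod beta * L). intros x y.
    replace (shear_re x - u - (shear_re y - u)) with (shear_re x - shear_re y) by ring.
    apply shear_re_bilipschitz.
  - pose proof (Cmod_ge_0 beta). unfold d. lra.
  - pose proof (Hdev (u - d)) as H. unfold d, Rabs in *. destruct Rcase_abs; lra.
  - pose proof (Hdev (u + d)) as H. unfold d, Rabs in *. destruct Rcase_abs; lra.
  - exists x. lra.
Qed.

Definition shear_re_inv (u : R) : R := proj1_sig (shear_re_surjective u).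

Lemma shear_re_invK u : shear_re (shear_re_inv u) = u.
Proof. unfold shear_re_inv. destruct (shear_re_surjective u). assumption. Qed.

Lemma shear_re_inv_lipschitz u v :
  (1 - Cmod beta * L) * Rabs (shear_re_inv u - shear_re_inv v) <= Rabs (u - v).
Proof.
  pose proof (shear_re_bilipschitz (shear_re_inv u) (shear_re_inv v)) as [H _].
  rewrite !shear_re_invK in H. exact H.
Qed.

Lemma shear_re_inj x y : shear_re x = shear_re y -> x = y.
Proof.
  intros Hxy. pose proof (shear_re_bilipschitz x y) as [H _].
  rewrite Hxy, Rminus_diag, Rabs_R0 in H.
  pose proof (Rabs_pos (x - y)).
  assert (Hd : Rabs (x - y) = 0) by nra. apply Rabs_eq_0 in Hd. lra.
Qed.

Definition shear_inv (w : C) : C := (w - beta * RtoC (K (shear_re_inv (Re w))))%C.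

Lemma Re_shear_inv w : Re (shear_inv w) = shear_re_inv (Re w).
Proof.
  unfold shear_inv. change (Re (w - beta * RtoC (K (shear_re_inv (Re w))))%C)
    with (Re w - Re (beta * RtoC (K (shear_re_inv (Re w))))). rewrite Re_mul_RtoC.
  pose proof (shear_re_invK (Re w)) as Hw. unfold shear_re in Hw. lra.
Qed.

Lemma shearK c : shear_inv (shear c) = c.
Proof.
  assert (Hre : shear_re_inv (Re (shear c)) = Re c).
  { apply shear_re_inj. rewrite shear_re_invK, Re_shear. reflexivity. }
  unfold shear_inv. rewrite Hre. unfold shear. ring.
Qed.

Lemma shear_invK w : shear (shear_inv w) = w.
Proof. unfold shear. rewrite Re_shear_inv. unfold shear_inv. ring. Qed.

Lemma shear_lipschitz x y :
  Cmod (shear x - shear y) <= (1 + Cmod beta * L) * Cmod (x - y).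
Proof.
  unfold shear.
  replace (x + beta * RtoC (K (Re x)) - (y + beta * RtoC (K (Re y))))%C
    with ((x - y) + beta * RtoC (K (Re x) - K (Re y)))%C by (rewrite RtoC_minus; ring).
  eapply Rle_trans; [apply Cmod_triangle|]. rewrite Cmod_mul_RtoC.
  pose proof (shear_variation (Re x) (Re y)).
  assert (Cmod beta * L * Rabs (Re x - Re y) <= Cmod beta * L * Cmod (x - y)).
  { apply Rmult_le_compat_l; [exact shear_rate_nonneg|]. exact (re_le_Cmod (x - y)). }
  lra.
Qed.

Lemma shear_inv_lipschitz x y :
  Cmod (shear_inv x - shear_inv y) <= / (1 - Cmod beta * L) * Cmod (x - y).
Proof.
  set (q := Cmod beta * L) in *.
  assert (Hq : 0 < 1 - q) by lra.
  set (u := shear_re_inv (Re x)). set (v := shear_re_inv (Re y)).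
  assert (Hh : Cmod (shear_inv x - shear_inv y) <= Cmod (x - y) + q * Rabs (u - v)).
  { unfold shear_inv. fold u v.
    replace (x - beta * RtoC (K u) - (y - beta * RtoC (K v)))%C
      with ((x - y) + - beta * RtoC (K u - K v))%C by (rewrite RtoC_minus; ring).
    eapply Rle_trans; [apply Cmod_triangle|].
    rewrite Cmod_mul_RtoC, Cmod_opp. pose proof (shear_variation u v) as Hv. fold q in Hv.
    lra. }
  pose proof (shear_re_inv_lipschitz (Re x) (Re y)) as Huv. fold q u v in Huv.
  pose proof (re_le_Cmod (x - y)) as Hre. change (Re (x - y)) with (Re x - Re y) in Hre.
  pose proof shear_rate_nonneg as Hq0. fold q in Hq0.
  apply Rmult_le_reg_l with (1 - q); [exact Hq|].
  rewrite <- Rmult_assoc, Rinv_r, Rmult_1_l by lra.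
  pose proof (Rabs_pos (u - v)). nra.
Qed.

Lemma shear_homeomorphism : is_homeomorphism shear.
Proof.
  exists shear_inv. split; [exact shearK|]. split; [exact shear_invK|]. split.
  - apply C_lipschitz_continuous with (1 + Cmod beta * L). exact shear_lipschitz.
  - apply C_lipschitz_continuous with (/ (1 - Cmod beta * L)). exact shear_inv_lipschitz.
Qed.

End Shear.

Definition shear_profile (e : R) (K : R -> R) : Prop :=
  (forall x, 0 <= K x <= 1) /\
  (forall x y, Rabs (K x - K y) <= / e * Rabs (x - y)) /\
  (forall x, Rabs x <= e -> K x = 0).

Lemma shear_profile_le_abs e K : 0 < e -> shear_profile e K ->
  forall x, 2 * e * K x <= Rabs x.
Proof.
  intros He [Hrange [Hlip Hzero]] x.
  destruct (Rle_or_lt (Rabs x) e) as [Hx|Hx].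
  { rewrite Hzero by exact Hx. pose proof (Rabs_pos x). lra. }
  assert (Hvia : forall y, Rabs y <= e -> Rabs (x - y) <= Rabs x - e ->
    e * K x <= Rabs x - e).
  { intros y Hy Hxy. pose proof (Hlip x y) as H.
    rewrite (Hzero y Hy), Rminus_0_r, Rabs_right in H by (apply Rle_ge, Hrange).
    apply Rmult_le_compat_l with (r := e) in H; [|lra].
    rewrite <- Rmult_assoc, Rinv_r, Rmult_1_l in H by lra. lra. }
  assert (Hlim : e * K x <= Rabs x - e).
  { destruct (Rle_or_lt 0 x); [apply (Hvia e)|apply (Hvia (- e))];
      unfold Rabs in *; repeat destruct Rcase_abs; lra. }
  pose proof (Hrange x). nra.
Qed.

Lemma shear_properties beta K e :
  3/10 <= e -> Cmod beta < 1/10 -> shear_profile e K ->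
  is_homeomorphism (shear beta K) /\ ratio_bound (shear beta K) /\
  lim_at0 (fun c => (shear beta K c / c)%C) 1%C /\
  lim_at_infty (fun c => (shear beta K c / c)%C) 1%C.
Proof.
  intros He Hb HK.
  pose proof (shear_profile_le_abs e K ltac:(lra) HK) as Hle.
  destruct HK as [Hrange [Hlip Hzero]].
  split; [|split; [|split]].
  - apply shear_homeomorphism with (/ e); [exact Hrange|exact Hlip|].
    apply Rmult_lt_reg_r with e; [lra|].
    rewrite Rmult_assoc, Rinv_l, Rmult_1_r, Rmult_1_l by lra. lra.
  - apply shear_ratio_bound with e; assumption.
  - apply shear_ratio_at0 with e; [lra|].
    intros x Hx. apply Hzero. lra.
  - apply shear_ratio_at_infty. exact Hrange.
Qed.

(** * The maps psi+ and psi- *)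

Lemma psi_plus_shear alpha : psi_plus alpha = shear alpha (g alpha).
Proof. reflexivity. Qed.

Lemma psi_minus_shear alpha :
  psi_minus alpha = shear (- alpha) (fun x => 1 - g alpha (1 + x - Re alpha)).
Proof.
  apply functional_extensionality. intros c. unfold psi_minus, shear.
  change (Re (c - alpha)) with (Re c - Re alpha).
  replace (1 + (Re c - Re alpha)) with (1 + Re c - Re alpha) by ring.
  rewrite RtoC_minus. ring.
Qed.

Lemma psi_plus_translate alpha c :
  psi_plus alpha (c + 1 - alpha)%C = (psi_minus alpha c + 1)%C.
Proof.
  unfold psi_plus, psi_minus.
  change (Re (c + 1 - alpha)) with (Re c + 1 - Re alpha).
  change (Re (c - alpha)) with (Re c - Re alpha).
  replace (Re c + 1 - Re alpha) with (1 + (Re c - Re alpha)) by ring. ring.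
Qed.

Lemma psi_minus_translate alpha c :
  psi_minus alpha (c + 1 + alpha)%C = (psi_plus alpha c + 1)%C.
Proof.
  unfold psi_plus, psi_minus, g.
  change (Re (c + 1 + alpha - alpha)) with (Re c + 1 + Re alpha - Re alpha).
  replace (1 + (Re c + 1 + Re alpha - Re alpha)) with (Re c + 2) by ring.
  rewrite red2_add2. ring.
Qed.

Section Profiles.
Variable alpha : C.
Hypothesis alpha_small : Cmod alpha < 1/10.

Lemma eta_of_range : 0 < eta_of alpha <= 1/2.
Proof. pose proof (eta_of_bounds alpha alpha_small). lra. Qed.

Lemma g_shear_profile : shear_profile (eta_of alpha) (g alpha).
Proof.
  pose proof eta_of_range as He. unfold g.
  split; [|split].
  - intros x. now apply periodic_g0_range.
  - intros x y. now apply periodic_g0_lipschitz.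
  - intros x Hx. now apply periodic_g0_zero.
Qed.

(* 3 eta = 1 - |Re alpha| puts 1 + x - Re alpha in [2 eta, 2 - 2 eta] for |x| <= eta. *)
Lemma g_reflected_shear_profile :
  shear_profile (eta_of alpha) (fun x => 1 - g alpha (1 + x - Re alpha)).
Proof.
  pose proof eta_of_range as He. unfold g.
  split; [|split].
  - intros x. pose proof (periodic_g0_range _ He (1 + x - Re alpha)). lra.
  - intros x y.
    assert (Hreflect : forall u v, 1 - u - (1 - v) = - (u - v)) by (intros; ring).
    rewrite Hreflect, Rabs_Ropp.
    replace (x - y) with (1 + x - Re alpha - (1 + y - Re alpha)) by ring.
    now apply periodic_g0_lipschitz.
  - intros x Hx. rewrite periodic_g0_one; [ring|exact He|].
    unfold eta_of in *. unfold Rabs in *. repeat destruct Rcase_abs; lra.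
Qed.

End Profiles.

Theorem mainTheorem3 (alpha : C) (Halpha : Cmod alpha < 1 / 10) :
  is_homeomorphism (psi_plus alpha) /\ is_homeomorphism (psi_minus alpha) /\
  (forall c : C, psi_plus alpha (c + 1 - alpha)%C = (psi_minus alpha c + 1)%C) /\
  (forall c : C, psi_minus alpha (c + 1 + alpha)%C = (psi_plus alpha c + 1)%C) /\
  psi_plus alpha 0%C = 0%C /\ psi_minus alpha 0%C = 0%C /\
  lim_at0 (fun c => (psi_plus alpha c / c)%C) 1%C /\
  lim_at0 (fun c => (psi_minus alpha c / c)%C) 1%C /\
  lim_at_infty (fun c => (psi_plus alpha c / c)%C) 1%C /\
  lim_at_infty (fun c => (psi_minus alpha c / c)%C) 1%C /\
  ratio_bound (psi_plus alpha) /\ ratio_bound (psi_minus alpha).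
Proof.
  pose proof (eta_of_bounds alpha Halpha) as He.
  pose proof (g_shear_profile alpha Halpha) as Hplus.
  pose proof (g_reflected_shear_profile alpha Halpha) as Hminus.
  pose proof (shear_properties alpha _ (eta_of alpha) ltac:(lra) Halpha Hplus)
    as [HP1 [HP2 [HP3 HP4]]].
  pose proof (shear_properties (- alpha) _ (eta_of alpha) ltac:(lra)
    ltac:(rewrite Cmod_opp; exact Halpha) Hminus) as [HM1 [HM2 [HM3 HM4]]].
  rewrite <- psi_plus_shear in HP1, HP2, HP3, HP4.
  rewrite <- psi_minus_shear in HM1, HM2, HM3, HM4.
  refine (conj HP1 (conj HM1 (conj (psi_plus_translate alpha)
    (conj (psi_minus_translate alpha) (conj _ (conj _
    (conj HP3 (conj HM3 (conj HP4 (conj HM4 (conj HP2 HM2))))))))))).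
  - rewrite psi_plus_shear. apply shear0, Hplus. rewrite Rabs_R0. lra.
  - rewrite psi_minus_shear. apply shear0, Hminus. rewrite Rabs_R0. lra.
Qed.
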